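(* Let $b\in\mathbb{N}\setminus\{1\}$, $\xi_m\in\{-1,+1\}$ ($m\in\mathbb{Z}_+$) arbitrary, $\phi:\mathbb{R}\to\mathbb{R}$ periodic with period $1$, vanishing on $\mathbb{Z}$, and H\''older continuous with exponent $\gamma\in(0,1]$, and $\psi:(0,\infty)\to(0,\infty)$ submultiplicative with $\psi(b^{-1})\in(0,1)$. Let $f(t)=\sum_{m=0}^\infty \xi_m\psi(b^{-m})\phi(b^mt)$, $t\in[0,1]$, let $\Pi_n:=\{kb^{-n}:k=0,1,\dots,b^n\}$, $n\in\mathbb{N}$, and let $p\ge1$. (i) If $\psi(b^{-1})<b^{-\gamma}$, then $\limsup_{n\to\infty}\frac{RV^p_n(f,\Pi_n)}{b^{p(1-\gamma)n}}<\infty$. (ii) If $\psi(b^{-1})=b^{-\gamma}$, then $\limsup_{n\to\infty}\frac{RV^p_n(f,\Pi_n)}{n^pb^{p(1-\gamma)n}}<\infty$. (iii) If $\psi(b^{-1})>b^{-\gamma}$, then $\limsup_{n\to\infty}\frac{RV^p_n(f,\Pi_n)}{b^{p(1-\beta)n}}<\infty$, where $\beta:=-\log_b(\psi(b^{-1}))\in(0,\gamma)$.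
   Context: $\psi$ submultiplicative: $\psi(xy)\le\psi(x)\psi(y)$ for $x,y>0$. For $g:[0,1]\to\mathbb{R}$, $p\ge1$ and a partition $\mathcal{P}=\{0=t_0<t_1<\dots<t_N=1\}$ of $[0,1]$, the $p^{\mathrm{th}}$-order Riesz variation is $RV^p(g,\mathcal{P}):=\sum_{k=0}^{N-1}\frac{|g(t_{k+1})-g(t_k)|^p}{(t_{k+1}-t_k)^{p-1}}$; for the $b$-adic partition this is $RV^p_n(g,\Pi_n)=b^{n(p-1)}\sum_{k=0}^{b^n-1}|g((k+1)b^{-n})-g(kb^{-n})|^p$. *)

From Stdlib Require Import Reals.
From Coquelicot Require Import Coquelicot.
Open Scope R_scope.

(* Real power x^a for x >= 0, with the convention 0^a = 0 (a > 0 in all uses). *)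
Definition rpow (x a : R) : R :=
  if Req_EM_T x 0 then 0 else Rpower x a.

Fixpoint fsum (g : nat -> R) (N : nat) : R :=
  match N with
  | O => 0
  | S k => fsum g k + g k
  end.

Definition riesz_var (p : R) (g : R -> R) (t : nat -> R) (N : nat) : R :=
  fsum (fun k => rpow (Rabs (g (t (S k)) - g (t k))) p
                 / rpow (t (S k) - t k) (p - 1)) N.

Definition badic (b n : nat) (k : nat) : R := INR k / INR b ^ n.

Definition RVn (p : R) (g : R -> R) (b n : nat) : R :=
  riesz_var p g (badic b n) (b ^ n)%nat.

Definition submultiplicative (psi : R -> R) : Prop :=
  forall x y, 0 < x -> 0 < y -> psi (x * y) <= psi x * psi y.

Definition holder (phi : R -> R) (gamma : R) : Prop :=
  exists K : R, forall x y, Rabs (phi x - phi y) <= K * rpow (Rabs (x - y)) gamma.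

Definition takagi_f (b : nat) (xi : nat -> R) (psi phi : R -> R) (t : R) : R :=
  Series (fun m => xi m * psi (/ (INR b ^ m)) * phi (INR b ^ m * t)).

From Stdlib Require Import Reals Lra Lia.
From Coquelicot Require Import Coquelicot.
Open Scope R_scope.

(* At a b-adic point k b^-n every term of the series with index m >= n vanishes,
   since phi is zero on the integers; so an increment of f over a cell of Pi_n is a
   finite sum over m < n.  By Hölder continuity and submultiplicativity its m-th term
   is at most psi(1) K psi(b^-1)^m b^(gamma (m - n)), hence the increment is at most
   b^(-gamma n) times a geometric sum of ratio q = psi(b^-1) b^gamma, which is O(1),
   O(n) or O(q^n) according as q < 1, q = 1 or q > 1.  The Riesz variation over Pi_n
   is b^n such increments raised to the power p, each weighted by b^(n (p - 1)). *)

Lemma Rpower_pos x y : 0 < Rpower x y.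
Proof. apply exp_pos. Qed.

Lemma Rpower_1_l a : Rpower 1 a = 1.
Proof. unfold Rpower; rewrite ln_1, Rmult_0_r; apply exp_0. Qed.

Lemma Rpower_opp_mult_r B g : Rpower B (- g) * Rpower B g = 1.
Proof. rewrite Rpower_Ropp. apply Rinv_l, Rgt_not_eq, Rpower_pos. Qed.

Lemma Rpower_pow_l x g m : 0 < x -> Rpower (x ^ m) g = Rpower x g ^ m.
Proof.
  intros Hx.
  rewrite <- (Rpower_pow m x), <- (Rpower_pow m (Rpower x g)), !Rpower_mult by
    (auto; apply Rpower_pos).
  f_equal; ring.
Qed.

Lemma Rpower_opp_mult_pow x g n : 0 < x ->
  Rpower x (- (g * INR n)) = (/ Rpower x g) ^ n.
Proof.
  intros Hx. rewrite <- Rpower_Ropp, <- Rpower_pow, Rpower_mult by apply Rpower_pos.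
  f_equal; ring.
Qed.

Lemma Rpower_inv_l x g : 0 < x -> Rpower (/ x) g = / Rpower x g.
Proof. intros Hx. unfold Rpower. rewrite ln_Rinv, <- exp_Ropp by exact Hx. f_equal; ring. Qed.

Lemma rpow_Rpower x a : 0 < x -> rpow x a = Rpower x a.
Proof. intros Hx; unfold rpow; destruct (Req_EM_T x 0); [lra | reflexivity]. Qed.

Lemma rpow_0_l a : rpow 0 a = 0.
Proof. unfold rpow; destruct (Req_EM_T 0 0); [reflexivity | congruence]. Qed.

Lemma rpow_ge0 x a : 0 <= rpow x a.
Proof. unfold rpow; destruct (Req_EM_T x 0); [lra | left; apply Rpower_pos]. Qed.

Lemma rpow_le_compat_l x y a : 0 <= a -> 0 <= x <= y -> rpow x a <= rpow y a.
Proof.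
  intros Ha Hxy. destruct (Req_EM_T x 0) as [-> | Hx].
  - rewrite rpow_0_l; apply rpow_ge0.
  - rewrite !rpow_Rpower by lra. apply Rle_Rpower_l; lra.
Qed.

Lemma rpow_le_1 x a : 0 <= a -> 0 <= x <= 1 -> rpow x a <= 1.
Proof.
  intros Ha Hx. apply Rle_trans with (rpow 1 a); [apply rpow_le_compat_l; lra |].
  rewrite rpow_Rpower, Rpower_1_l by lra; lra.
Qed.

Lemma rpow_mult_distr x y a : 0 <= x -> 0 <= y -> rpow (x * y) a = rpow x a * rpow y a.
Proof.
  intros Hx Hy. destruct (Req_EM_T x 0) as [-> | Hx0].
  { rewrite Rmult_0_l, rpow_0_l; ring. }
  destruct (Req_EM_T y 0) as [-> | Hy0].
  { rewrite Rmult_0_r, rpow_0_l; ring. }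
  rewrite !rpow_Rpower by nra. symmetry; apply Rpower_mult_distr; lra.
Qed.

Lemma fsum_le g h n : (forall m, (m < n)%nat -> g m <= h m) -> fsum g n <= fsum h n.
Proof.
  induction n as [| n IH]; cbn [fsum]; intros H; [lra |].
  assert (g n <= h n) by (apply H; lia).
  assert (fsum g n <= fsum h n) by (apply IH; intros; apply H; lia).
  lra.
Qed.

Lemma Rabs_fsum_le g n : Rabs (fsum g n) <= fsum (fun m => Rabs (g m)) n.
Proof.
  induction n as [| n IH]; cbn [fsum]; [rewrite Rabs_R0; lra |].
  eapply Rle_trans; [apply Rabs_triang | lra].
Qed.

Lemma fsum_scal_l c g n : fsum (fun m => c * g m) n = c * fsum g n.
Proof. induction n as [| n IH]; cbn [fsum]; [| rewrite IH]; ring. Qed.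

Lemma fsum_const c n : fsum (fun _ => c) n = INR n * c.
Proof. induction n as [| n IH]; cbn [fsum]; [| rewrite IH, S_INR]; simpl; ring. Qed.

Lemma fsum_S_l g n : fsum g (S n) = g 0%nat + fsum (fun m => g (S m)) n.
Proof. induction n as [| n IH]; [cbn; ring |]. cbn [fsum] in *. rewrite IH; ring. Qed.

Lemma fsum_geom q n : (q - 1) * fsum (pow q) n = q ^ n - 1.
Proof. induction n as [| n IH]; cbn [fsum]; [| rewrite Rmult_plus_distr_l, IH]; simpl; ring. Qed.

Lemma fsum_geom_lt_1 q n : 0 <= q < 1 -> fsum (pow q) n <= / (1 - q).
Proof.
  intros Hq. pose proof (fsum_geom q n). pose proof (pow_le q n (proj1 Hq)).
  apply (Rmult_le_reg_r (1 - q)); [lra |]. rewrite Rinv_l; nra.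
Qed.

Lemma fsum_geom_1 n : fsum (pow 1) n = INR n.
Proof. induction n as [| n IH]; cbn [fsum]; [| rewrite IH, pow1, S_INR]; simpl; ring. Qed.

Lemma fsum_geom_gt_1 q n : 1 < q -> fsum (pow q) n <= q ^ n / (q - 1).
Proof.
  intros Hq. pose proof (fsum_geom q n).
  apply (Rmult_le_reg_r (q - 1)); [lra |]. unfold Rdiv.
  rewrite Rmult_assoc, Rinv_l; lra.
Qed.

Lemma Series_eventually_zero (w : nat -> R) n :
  ex_series w -> (forall m, (n <= m)%nat -> w m = 0) -> Series w = fsum w n.
Proof.
  revert w; induction n as [| n IH]; intros w Hw Hz.
  - cbn [fsum]. rewrite (Series_ext w (fun m => 0 * w m)) by (intros m; rewrite Hz by lia; ring).
    rewrite Series_scal_l; ring.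
  - rewrite Series_incr_1, IH, fsum_S_l by
      (try apply (proj1 (ex_series_incr_1 w)); auto; intros; apply Hz; lia).
    reflexivity.
Qed.

Lemma badic_step b n k : (0 < b)%nat -> badic b n (S k) - badic b n k = / INR b ^ n.
Proof.
  intros Hb. apply lt_0_INR in Hb. unfold badic. rewrite S_INR.
  field. apply pow_nonzero; lra.
Qed.

Lemma RVn_le p g b n D : (0 < b)%nat -> 0 <= p -> 0 <= D ->
  (forall k, (k < b ^ n)%nat -> Rabs (g (badic b n (S k)) - g (badic b n k)) <= D) ->
  RVn p g b n <= rpow D p * Rpower (INR b) (INR n * p).
Proof.
  intros Hb Hp HD Hinc. pose proof (lt_0_INR _ Hb) as HB.
  unfold RVn, riesz_var.
  eapply Rle_trans.
  { apply fsum_le with (h := fun _ => rpow D p * Rpower (INR b) (INR n * (p - 1))).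
    intros k Hk.
    rewrite badic_step, (rpow_Rpower (/ _)), Rpower_inv_l, <- Rpower_pow, Rpower_mult by
      (try exact Hb; try exact HB; try apply Rinv_0_lt_compat; apply pow_lt; lra).
    unfold Rdiv; rewrite Rinv_inv.
    apply Rmult_le_compat_r; [left; apply Rpower_pos |].
    apply rpow_le_compat_l; [lra | split; [apply Rabs_pos | auto]]. }
  rewrite fsum_const, pow_INR, <- Rpower_pow by lra.
  replace (INR n * p) with (INR n + INR n * (p - 1)) by ring.
  rewrite (Rpower_plus (INR n)). right; ring.
Qed.

Lemma RVn_le_geometric p g b n E theta : (0 < b)%nat -> 0 <= p -> 0 <= E ->
  (forall k, (k < b ^ n)%nat ->
     Rabs (g (badic b n (S k)) - g (badic b n k)) <= E * Rpower (INR b) (- (theta * INR n))) ->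
  RVn p g b n <= rpow E p * Rpower (INR b) (p * (1 - theta) * INR n).
Proof.
  intros Hb Hp HE Hinc.
  pose proof (Rpower_pos (INR b) (- (theta * INR n))).
  eapply Rle_trans; [apply RVn_le; auto; nra |].
  rewrite rpow_mult_distr, (rpow_Rpower (Rpower _ _)), Rpower_mult, Rmult_assoc, <- Rpower_plus
    by (auto; try left; apply Rpower_pos).
  right; do 2 f_equal; ring.
Qed.

Lemma submultiplicative_inv_pow_le psi B m : 0 < B ->
  (forall x, 0 < x -> 0 < psi x) -> submultiplicative psi ->
  psi (/ B ^ m) <= psi 1 * psi (/ B) ^ m.
Proof.
  intros HB Hpos Hsub. induction m as [| m IH]; simpl pow.
  - rewrite Rinv_1; lra.
  - assert (0 < psi (/ B)) by (apply Hpos, Rinv_0_lt_compat; lra).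
    rewrite Rinv_mult.
    eapply Rle_trans; [apply Hsub; apply Rinv_0_lt_compat; [| apply pow_lt]; lra |].
    apply Rle_trans with (psi (/ B) * (psi 1 * psi (/ B) ^ m)); [| right; ring].
    apply Rmult_le_compat_l; lra.
Qed.

Lemma Rpower_opp_Rlog B a : 1 < B -> 0 < a -> Rpower B (- - Rlog B a) = a.
Proof. intros HB Ha. rewrite Ropp_involutive. apply Rpower_Rlog; lra. Qed.

Lemma opp_Rlog_bounds B a g : 1 < B -> 0 < a < 1 -> Rpower B (- g) < a -> 0 < - Rlog B a < g.
Proof.
  intros HB Ha Hlt. unfold Rlog.
  assert (HlnB : 0 < ln B) by (rewrite <- ln_1; apply ln_increasing; lra).
  assert (Hlna : ln a < 0) by (rewrite <- ln_1; apply ln_increasing; lra).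
  apply ln_increasing in Hlt; [| apply Rpower_pos]. rewrite ln_Rpower in Hlt.
  pose proof (Rinv_0_lt_compat _ HlnB). pose proof (Rinv_r (ln B) (Rgt_not_eq _ _ HlnB)).
  unfold Rdiv; split; nra.
Qed.

Lemma LimSup_seq_div_lt_p_infty u v M : (forall n, u n <= M * v n) -> 0 <= M ->
  (forall n, 0 <= v n) -> Rbar_lt (LimSup_seq (fun n => u n / v n)) p_infty.
Proof.
  intros Huv HM Hv.
  apply Rbar_le_lt_trans with (LimSup_seq (fun _ => M)); [| rewrite LimSup_seq_const; exact I].
  apply LimSup_le. exists 0%nat; intros n _.
  destruct (Hv n) as [Hpos | <-].
  - apply (Rmult_le_reg_r (v n)); [auto |]. unfold Rdiv.
    rewrite Rmult_assoc, Rinv_l, Rmult_1_r by lra. apply Huv.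
  - (* [x / 0 = 0], which covers the vanishing denominator at n = 0 in the critical case *)
    unfold Rdiv; rewrite Rinv_0, Rmult_0_r; exact HM.
Qed.

Section HolderConstant.

Variables (phi : R -> R) (gamma K : R).
Hypothesis Hhol : forall x y, Rabs (phi x - phi y) <= K * rpow (Rabs (x - y)) gamma.

Lemma holder_const_ge0 : 0 <= K.
Proof.
  pose proof (Hhol 1 0) as H.
  rewrite Rminus_0_r, Rabs_R1, rpow_Rpower, Rpower_1_l, Rmult_1_r in H by lra.
  pose proof (Rabs_pos (phi 1 - phi 0)); lra.
Qed.

Lemma holder_bounded_of_zero_on_Z : 0 <= gamma -> (forall z, phi (IZR z) = 0) ->
  forall x, Rabs (phi x) <= K.
Proof.
  intros Hg Hz x. destruct (archimed x) as [Hup1 Hup2].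
  pose proof (Hhol x (IZR (up x))) as H. rewrite Hz, Rminus_0_r in H.
  assert (rpow (Rabs (x - IZR (up x))) gamma <= 1).
  { apply rpow_le_1; [lra |].
    split; [apply Rabs_pos | rewrite Rabs_minus_sym, Rabs_right; lra]. }
  pose proof holder_const_ge0. nra.
Qed.

End HolderConstant.

Section TakagiIncrements.

Variables (b : nat) (xi : nat -> R) (phi psi : R -> R) (gamma K : R).
Hypothesis Hb : (2 <= b)%nat.
Hypothesis Hxi : forall m, Rabs (xi m) <= 1.
Hypothesis Hzero : forall z : Z, phi (IZR z) = 0.
Hypothesis Hgamma : 0 <= gamma.
Hypothesis Hhol : forall x y, Rabs (phi x - phi y) <= K * rpow (Rabs (x - y)) gamma.
Hypothesis Hpsipos : forall x, 0 < x -> 0 < psi x.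
Hypothesis Hsub : submultiplicative psi.
Hypothesis Hpsib : psi (/ INR b) < 1.

Let term m t := xi m * psi (/ INR b ^ m) * phi (INR b ^ m * t).
Let f := takagi_f b xi psi phi.
Let C := psi 1 * K.
Let q := psi (/ INR b) * Rpower (INR b) gamma.

Lemma INR_b_gt_1 : 1 < INR b.
Proof. apply le_INR in Hb; simpl in Hb; lra. Qed.

Lemma psi_inv_b_pow_le m : psi (/ INR b ^ m) <= psi 1 * psi (/ INR b) ^ m.
Proof. apply submultiplicative_inv_pow_le; auto. pose proof INR_b_gt_1; lra. Qed.

Lemma psi_inv_b_pow_pos m : 0 < psi (/ INR b ^ m).
Proof. pose proof INR_b_gt_1. apply Hpsipos, Rinv_0_lt_compat, pow_lt; lra. Qed.

Lemma takagi_terms_ex_series t : ex_series (fun m => term m t).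
Proof.
  unfold term.
  assert (Ha : 0 < psi (/ INR b)) by (apply Hpsipos, Rinv_0_lt_compat; pose proof INR_b_gt_1; lra).
  apply (@ex_series_le R_AbsRing R_CompleteNormedModule _
           (fun m => psi 1 * K * psi (/ INR b) ^ m)).
  - intros m. change (norm ?x) with (Rabs x).
    rewrite !Rabs_mult, (Rabs_pos_eq (psi _)) by (left; apply psi_inv_b_pow_pos).
    pose proof (psi_inv_b_pow_pos m). pose proof (psi_inv_b_pow_le m).
    pose proof (holder_bounded_of_zero_on_Z phi gamma K Hhol Hgamma Hzero (INR b ^ m * t)).
    pose proof (Rabs_pos (xi m)). pose proof (Rabs_pos (phi (INR b ^ m * t))).
    pose proof (Hxi m).
    apply Rle_trans with (1 * (psi 1 * psi (/ INR b) ^ m) * K); [| right; ring].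
    apply Rmult_le_compat; [nra | auto | | auto]. apply Rmult_le_compat; lra.
  - apply (ex_series_scal_l (psi 1 * K) (fun m => psi (/ INR b) ^ m)).
    apply ex_series_geom. rewrite Rabs_pos_eq; lra.
Qed.

Lemma phi_scaled_badic_zero n m k : (n <= m)%nat -> phi (INR b ^ m * badic b n k) = 0.
Proof.
  intros Hnm. pose proof INR_b_gt_1.
  replace (INR b ^ m * badic b n k) with (INR (k * b ^ (m - n))).
  { rewrite INR_IZR_INZ; apply Hzero. }
  unfold badic. rewrite mult_INR, pow_INR.
  replace m with ((m - n) + n)%nat at 2 by lia. rewrite pow_add.
  field. apply pow_nonzero; lra.
Qed.

Lemma takagi_badic_increment n k :
  f (badic b n (S k)) - f (badic b n k)
  = fsum (fun m => term m (badic b n (S k)) - term m (badic b n k)) n.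
Proof.
  unfold f, takagi_f; fold term. rewrite <- Series_minus by apply takagi_terms_ex_series.
  apply Series_eventually_zero.
  - exact (ex_series_minus _ _ (takagi_terms_ex_series _) (takagi_terms_ex_series _)).
  - intros m Hm. unfold term. rewrite !phi_scaled_badic_zero by exact Hm. ring.
Qed.

Lemma phi_scaled_badic_increment_le n k m :
  Rabs (phi (INR b ^ m * badic b n (S k)) - phi (INR b ^ m * badic b n k))
  <= K * Rpower (INR b) gamma ^ m * Rpower (INR b) (- (gamma * INR n)).
Proof.
  pose proof INR_b_gt_1 as HB.
  assert (Hbm : 0 < INR b ^ m) by (apply pow_lt; lra).
  assert (Hbn : 0 < / INR b ^ n) by (apply Rinv_0_lt_compat, pow_lt; lra).
  eapply Rle_trans; [apply Hhol |].
  rewrite <- Rmult_minus_distr_l, badic_step, Rabs_pos_eq, rpow_Rpower by (lia || nra).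
  rewrite <- Rpower_mult_distr, Rpower_inv_l, !Rpower_pow_l, Rpower_opp_mult_pow, pow_inv
    by (lra || apply pow_lt; lra).
  right; ring.
Qed.

Lemma takagi_term_increment_le n k m :
  Rabs (term m (badic b n (S k)) - term m (badic b n k))
  <= C * Rpower (INR b) (- (gamma * INR n)) * q ^ m.
Proof.
  unfold term. rewrite <- Rmult_minus_distr_l, !Rabs_mult.
  rewrite (Rabs_pos_eq (psi _)) by (left; apply psi_inv_b_pow_pos).
  pose proof (psi_inv_b_pow_pos m). pose proof (psi_inv_b_pow_le m).
  pose proof (phi_scaled_badic_increment_le n k m). pose proof (Hxi m).
  pose proof (Rabs_pos (xi m)).
  pose proof (Rabs_pos (phi (INR b ^ m * badic b n (S k)) - phi (INR b ^ m * badic b n k))).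
  apply Rle_trans with
    (1 * (psi 1 * psi (/ INR b) ^ m)
     * (K * Rpower (INR b) gamma ^ m * Rpower (INR b) (- (gamma * INR n)))).
  - apply Rmult_le_compat; [nra | auto | | auto]. apply Rmult_le_compat; lra.
  - unfold C, q; rewrite Rpow_mult_distr. right; ring.
Qed.

Lemma takagi_badic_increment_le n k :
  Rabs (f (badic b n (S k)) - f (badic b n k))
  <= C * Rpower (INR b) (- (gamma * INR n)) * fsum (pow q) n.
Proof.
  rewrite takagi_badic_increment, <- fsum_scal_l.
  eapply Rle_trans; [apply Rabs_fsum_le |].
  apply fsum_le; intros m _. apply takagi_term_increment_le.
Qed.

Lemma takagi_const_ge0 : 0 <= C.
Proof.
  pose proof (holder_const_ge0 phi gamma K Hhol). pose proof (Hpsipos 1 Rlt_0_1).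
  unfold C; nra.
Qed.

Lemma ratio_lt_1_of_subcritical : psi (/ INR b) < Rpower (INR b) (- gamma) -> 0 <= q < 1.
Proof.
  intros Hlt. pose proof (Rpower_opp_mult_r (INR b) gamma). pose proof (Rpower_pos (INR b) gamma).
  pose proof (psi_inv_b_pow_pos 1). rewrite pow_1 in *. unfold q; split; nra.
Qed.

Lemma ratio_gt_1_of_supercritical : Rpower (INR b) (- gamma) < psi (/ INR b) -> 1 < q.
Proof.
  intros Hgt. pose proof (Rpower_opp_mult_r (INR b) gamma). pose proof (Rpower_pos (INR b) gamma).
  unfold q; nra.
Qed.

Lemma takagi_badic_increment_le_subcritical n k :
  psi (/ INR b) < Rpower (INR b) (- gamma) ->
  Rabs (f (badic b n (S k)) - f (badic b n k))
  <= C / (1 - q) * Rpower (INR b) (- (gamma * INR n)).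
Proof.
  intros Hlt. pose proof (ratio_lt_1_of_subcritical Hlt) as Hq.
  pose proof (fsum_geom_lt_1 q n Hq). pose proof takagi_const_ge0.
  pose proof (Rpower_pos (INR b) (- (gamma * INR n))).
  eapply Rle_trans; [apply takagi_badic_increment_le |].
  apply Rle_trans with (C * Rpower (INR b) (- (gamma * INR n)) * / (1 - q)).
  - apply Rmult_le_compat_l; [nra | auto].
  - right; unfold Rdiv; ring.
Qed.

Lemma takagi_badic_increment_le_critical n k :
  psi (/ INR b) = Rpower (INR b) (- gamma) ->
  Rabs (f (badic b n (S k)) - f (badic b n k))
  <= C * INR n * Rpower (INR b) (- (gamma * INR n)).
Proof.
  intros Heq.
  assert (Hq : q = 1) by (unfold q; rewrite Heq; apply Rpower_opp_mult_r).
  eapply Rle_trans; [apply takagi_badic_increment_le |].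
  rewrite Hq, fsum_geom_1. right; ring.
Qed.

Lemma takagi_badic_increment_le_supercritical beta n k :
  Rpower (INR b) (- gamma) < psi (/ INR b) -> Rpower (INR b) (- beta) = psi (/ INR b) ->
  Rabs (f (badic b n (S k)) - f (badic b n k))
  <= C / (q - 1) * Rpower (INR b) (- (beta * INR n)).
Proof.
  intros Hgt Hbeta. pose proof INR_b_gt_1. pose proof (ratio_gt_1_of_supercritical Hgt) as Hq.
  assert (Hpow : Rpower (INR b) (- (gamma * INR n)) * q ^ n
                 = Rpower (INR b) (- (beta * INR n))).
  { rewrite !Rpower_opp_mult_pow, <- !Rpower_Ropp, Hbeta, <- Rpow_mult_distr by lra.
    unfold q. f_equal. rewrite <- Rmult_assoc, (Rmult_comm _ (psi _)), Rmult_assoc,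
      Rpower_opp_mult_r. ring. }
  pose proof (fsum_geom_gt_1 q n Hq). pose proof takagi_const_ge0.
  pose proof (Rpower_pos (INR b) (- (gamma * INR n))).
  eapply Rle_trans; [apply takagi_badic_increment_le |].
  apply Rle_trans with (C * Rpower (INR b) (- (gamma * INR n)) * (q ^ n / (q - 1))).
  - apply Rmult_le_compat_l; [nra | auto].
  - rewrite <- Hpow. right; unfold Rdiv; ring.
Qed.

Lemma RVn_takagi_le_subcritical p n : 0 <= p ->
  psi (/ INR b) < Rpower (INR b) (- gamma) ->
  RVn p f b n <= rpow (C / (1 - q)) p * Rpower (INR b) (p * (1 - gamma) * INR n).
Proof.
  intros Hp Hlt. pose proof (ratio_lt_1_of_subcritical Hlt). pose proof takagi_const_ge0.
  apply RVn_le_geometric;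
    [lia | auto | | intros k _; apply takagi_badic_increment_le_subcritical; auto].
  unfold Rdiv; apply Rmult_le_pos; [auto | left; apply Rinv_0_lt_compat; lra].
Qed.

Lemma RVn_takagi_le_critical p n : 0 <= p ->
  psi (/ INR b) = Rpower (INR b) (- gamma) ->
  RVn p f b n <= rpow C p * (rpow (INR n) p * Rpower (INR b) (p * (1 - gamma) * INR n)).
Proof.
  intros Hp Heq. pose proof takagi_const_ge0. pose proof (pos_INR n).
  rewrite <- Rmult_assoc, <- rpow_mult_distr by auto.
  apply RVn_le_geometric;
    [lia | auto | nra | intros k _; apply takagi_badic_increment_le_critical; auto].
Qed.

Lemma RVn_takagi_le_supercritical p n beta : 0 <= p ->
  Rpower (INR b) (- gamma) < psi (/ INR b) -> Rpower (INR b) (- beta) = psi (/ INR b) ->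
  RVn p f b n <= rpow (C / (q - 1)) p * Rpower (INR b) (p * (1 - beta) * INR n).
Proof.
  intros Hp Hgt Hbeta. pose proof (ratio_gt_1_of_supercritical Hgt). pose proof takagi_const_ge0.
  apply RVn_le_geometric;
    [lia | auto | | intros k _; apply takagi_badic_increment_le_supercritical; auto].
  unfold Rdiv; apply Rmult_le_pos; [auto | left; apply Rinv_0_lt_compat; lra].
Qed.

End TakagiIncrements.

Theorem theorem4p2
  (b : nat) (xi : nat -> R) (phi psi : R -> R) (gamma p : R)
  (Hb : (2 <= b)%nat)
  (Hxi : forall m, xi m = 1 \/ xi m = -1)
  (Hper : forall x, phi (x + 1) = phi x)
  (Hzero : forall z : Z, phi (IZR z) = 0)
  (Hgamma : 0 < gamma <= 1)
  (Hhol : holder phi gamma)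
  (Hpsipos : forall x, 0 < x -> 0 < psi x)
  (Hsub : submultiplicative psi)
  (Hpsib : 0 < psi (/ INR b) < 1)
  (Hp : 1 <= p) :
  let f := takagi_f b xi psi phi in
  (psi (/ INR b) < Rpower (INR b) (- gamma) ->
     Rbar_lt (LimSup_seq (fun n =>
       RVn p f b n / Rpower (INR b) (p * (1 - gamma) * INR n))) p_infty) /\
  (psi (/ INR b) = Rpower (INR b) (- gamma) ->
     Rbar_lt (LimSup_seq (fun n =>
       RVn p f b n / (rpow (INR n) p * Rpower (INR b) (p * (1 - gamma) * INR n))))
       p_infty) /\
  (Rpower (INR b) (- gamma) < psi (/ INR b) ->
     let beta := - (ln (psi (/ INR b)) / ln (INR b)) in
     0 < beta < gamma /\
     Rbar_lt (LimSup_seq (fun n =>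
       RVn p f b n / Rpower (INR b) (p * (1 - beta) * INR n))) p_infty).
Proof.
  intros f. destruct Hhol as [K HK].
  assert (Hxi1 : forall m, Rabs (xi m) <= 1).
  { intros m; destruct (Hxi m) as [-> | ->]; rewrite ?Rabs_R1, ?Rabs_m1; lra. }
  assert (HB : 1 < INR b) by (apply le_INR in Hb; simpl in Hb; lra).
  assert (Hden : forall theta, 0 <= Rpower (INR b) theta) by (left; apply Rpower_pos).
  split; [| split].
  - intros Hlt. eapply LimSup_seq_div_lt_p_infty; [| apply rpow_ge0 | auto].
    intros n; apply (RVn_takagi_le_subcritical b xi phi psi gamma K); auto; lra.
  - intros Heq. eapply LimSup_seq_div_lt_p_infty; [| apply rpow_ge0 |].
    + intros n; apply (RVn_takagi_le_critical b xi phi psi gamma K); auto; lra.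
    + intros n; apply Rmult_le_pos; auto using rpow_ge0.
  - intros Hgt beta. split; [apply opp_Rlog_bounds; auto |].
    eapply LimSup_seq_div_lt_p_infty; [| apply rpow_ge0 | auto].
    intros n; apply (RVn_takagi_le_supercritical b xi phi psi gamma K); auto; try lra.
    apply (Rpower_opp_Rlog (INR b)); lra.
Qed.
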